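(* Let $V$ be a positive dimensional real normed vector space and $\varphi:V\to V$ an invertible linear map. Let $C\subseteq V$ be a convex cone with $\varphi(C)=C$. Suppose all eigenvalues of $\varphi$ are of modulus greater than $1$. Then $(\varphi-\operatorname{id}_V)^{-1}(C)\subseteq C$.
   Context: $(\varphi-\operatorname{id}_V)^{-1}(C)$ denotes the preimage of $C$ under the linear map $\varphi-\operatorname{id}_V$. *)

From HB Require Import structures.
From mathcomp Require Import all_boot all_order all_algebra.
From mathcomp Require Import complex.
From mathcomp Require Import reals.
Set Implicit Arguments. Unset Strict Implicit. Unset Printing Implicit Defensive.
Import Order.TTheory GRing.Theory Num.Theory.
Local Open Scope ring_scope.

Definition convex_cone (R : realType) (n : nat) (C : 'rV[R]_n -> Prop) : Prop :=
  forall (a b : R) (x y : 'rV[R]_n), 0 <= a -> 0 <= b -> C x -> C y ->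
    C (a *: x + b *: y).

Definition complex_eigenvalue (R : realType) (n : nat) (A : 'M[R]_n)
    (z : R[i]) : Prop :=
  root (map_poly (fun r : R => (r%:C)%C) (char_poly A)) z.

(* With B = A^-1, every complex eigenvalue of B lies in the open unit disc and
   (A - 1)^-1 = B (1 - B)^-1 = sum_(k >= 1) B^k.  Since C need not be closed the
   series is truncated: (1 - B)^-1 = sum_(k < N) B^k + B^N (1 - B)^-1, and the tail
   B^N (1 - B)^-1 is e_N(B) with e_N = X^N g mod char_poly B, where g(B) = (1 - B)^-1.
   Each coefficient sequence N |-> (e_N)_j satisfies the linear recurrence with
   characteristic polynomial char_poly B, whose roots lie in the unit disc, so it
   tends to 0.  For N large all these coefficients exceed -1, which writes
   (A - 1)^-1 as B times a polynomial in B with nonnegative coefficients; such a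
   matrix maps the B-invariant cone C into itself. *)

From HB Require Import structures.
From mathcomp Require Import all_boot all_order all_algebra.
From mathcomp Require Import complex.
From mathcomp Require Import reals.
From mathcomp Require Import lra.
Import Normc.
Set Implicit Arguments. Unset Strict Implicit. Unset Printing Implicit Defensive.
Import Order.TTheory GRing.Theory Num.Theory.
Local Open Scope ring_scope.

Lemma bernoulli_ineq (R : realDomainType) (d : R) (k : nat) :
  0 <= d -> 1 + k%:R * d <= (1 + d) ^+ k.
Proof.
move=> d_ge0; elim: k => [|k IHk]; first by rewrite expr0 mul0r addr0.
rewrite exprS -natr1; have kd_ge0 : 0 <= k%:R * d by rewrite mulr_ge0.
nra.
Qed.

Lemma exists_exprn_lt (R : archiRealFieldType) (c eta : R) :
  0 <= c < 1 -> 0 < eta -> exists k : nat, c ^+ k < eta.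
Proof.
case/andP=> c_ge0 c_lt1 eta_gt0.
have [->|c_neq0] := eqVneq c 0; first by exists 1%N; rewrite expr1.
have c_gt0 : 0 < c by rewrite lt_def c_neq0.
pose d := c^-1 - 1.
have d_gt0 : 0 < d by rewrite subr_gt0 invf_gt1.
have cE : c = (1 + d)^-1 by rewrite /d addrC subrK invrK.
pose k := Num.bound (eta * d)^-1.
have k_gt : (eta * d)^-1 < k%:R by rewrite archi_boundP // invr_ge0 ltW ?mulr_gt0.
exists k; rewrite cE exprVn invf_plt ?posrE ?exprn_gt0 ?mulr_gt0 //; last by rewrite ltr_wpDr ?ltW.
apply: lt_le_trans (bernoulli_ineq k (ltW d_gt0)).
have : eta^-1 < k%:R * d by rewrite -ltr_pdivrMr // -invfM.
lra.
Qed.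

Definition eventually (P : nat -> Prop) : Prop :=
  exists M, forall N, (M <= N)%N -> P N.

Definition vanishing (R : rcfType) (u : nat -> R[i]) : Prop :=
  forall e : R, 0 < e -> eventually (fun N => normc (u N) < e).

Lemma eventually_forall (I : finType) (P : I -> nat -> Prop) :
  (forall i, eventually (P i)) -> eventually (fun N => forall i, P i N).
Proof.
move=> /fin_all_exists[M PM]; exists (\max_i M i) => N le_MN i.
by apply: PM; apply: leq_trans le_MN; apply: leq_bigmax.
Qed.

Lemma vanishing_linear_recursion (R : realType) (l : R[i]) (u w : nat -> R[i]) :
  normc l < 1 -> (forall N, u N.+1 = l * u N + w N) -> vanishing w -> vanishing u.
Proof.
move=> l_lt1 uS w0 e e_gt0; set c : R := normc l.
have c_ge0 : 0 <= c by rewrite /c; case: (l) => a b; rewrite sqrtr_ge0.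
have [M wM] : eventually (fun N => normc (w N) < e * (1 - c) / 2).
  by apply: w0; rewrite divr_gt0 ?mulr_gt0 ?subr_gt0.
pose a N := normc (u N) - e / 2.
have aS N : (M <= N)%N -> a N.+1 <= c * a N.
  move=> /wM; rewrite /a uS; have := le_normcD (l * u N) (w N).
  by rewrite normcM -/c; lra.
pose K := `|a M|.
have aK k : a (M + k)%N <= c ^+ k * K.
  elim: k => [|k IHk]; first by rewrite addn0 expr0 mul1r ler_norm.
  rewrite addnS exprS -mulrA; apply: le_trans (aS _ (leq_addr _ _)) _.
  by rewrite ler_wpM2l.
have K1_gt0 : 0 < K + 1 by rewrite ltr_wpDl ?normr_ge0.
have [k ck] : exists k, c ^+ k < e / (2 * (K + 1)).
  by apply: exists_exprn_lt; rewrite ?c_ge0 ?divr_gt0 ?mulr_gt0.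
exists (M + k)%N => N le_N; rewrite -(subnKC (leq_trans (leq_addr k M) le_N)).
have : c ^+ (N - M) * K <= c ^+ k * (K + 1).
  rewrite ler_pM ?exprn_ge0 ?normr_ge0 ?lerDl ?ler_wiXn2l ?(ltW l_lt1) //.
  by rewrite leq_subRL // (leq_trans (leq_addr k M) le_N).
have ckK : c ^+ k * (K + 1) < e / 2 by rewrite -ltr_pdivlMr // -mulrA -invfM.
have := aK (N - M)%N; rewrite /a; lra.
Qed.

(* [shift_eval p u N] is [(p(S) u) N], where [S] is the shift [u |-> u \o succn]. *)
Definition shift_eval (F : nzRingType) (p : {poly F}) (u : nat -> F) (N : nat) : F :=
  \sum_(i < size p) p`_i * u (N + i)%N.

Lemma shift_eval_widen (F : nzRingType) (p : {poly F}) u N K : (size p <= K)%N ->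
  shift_eval p u N = \sum_(i < K) p`_i * u (N + i)%N.
Proof.
move=> le_pK; rewrite /shift_eval (big_ord_widen _ (fun i => p`_i * u (N + i)%N) le_pK).
rewrite big_mkcond /=.
by apply: eq_bigr => i _; case: ltnP => // /(nth_default 0) ->; rewrite mul0r.
Qed.

Lemma shift_eval_mulXsubC (F : comNzRingType) (q : {poly F}) l u N :
  shift_eval (q * ('X - l%:P)) u N = shift_eval q (fun N => u N.+1 - l * u N) N.
Proof.
have le_size : (size (q * ('X - l%:P))%R <= (size q).+1)%N.
  by apply: leq_trans (size_polyMleq _ _) _; rewrite size_XsubC addn2.
rewrite (shift_eval_widen _ _ le_size) /shift_eval.
under eq_bigr do rewrite mulrBr coefB coefMX coefMC mulrBl.
rewrite sumrB big_ord_recl big_ord_recr /= mul0r add0r.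
rewrite [q`_(size q)]nth_default // !mul0r addr0 -sumrB.
apply: eq_bigr => i _.
by rewrite /bump /= add1n addnS mulrBr mulrA [q`_i * l]mulrC.
Qed.

Lemma shift_eval_map (F : fieldType) (K : nzRingType) (f : {rmorphism F -> K})
    (p : {poly F}) u N :
  shift_eval (map_poly f p) (f \o u) N = f (shift_eval p u N).
Proof.
rewrite /shift_eval size_map_poly rmorph_sum.
by apply: eq_bigr => i _; rewrite coef_map rmorphM.
Qed.

Lemma shift_eval_coef_modp (F : fieldType) (p g : {poly F}) j N :
  shift_eval p (fun N => (('X^N * g) %% p)`_j) N = 0.
Proof.
rewrite /shift_eval.
transitivity ((\sum_(i < size p) p`_i *: ('X^(N + i) * g)) %% p)`_j.
  rewrite (big_morph (fun q => q %% p) (modpD p) (mod0p p)) coef_sum.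
  by apply: eq_bigr => i _; rewrite modpZl coefZ.
suff -> : \sum_(i < size p) p`_i *: ('X^(N + i) * g) = ('X^N * g) * p.
  by rewrite modp_mull coef0.
rewrite -[p in RHS]coefK poly_def mulr_sumr; apply: eq_bigr => i _.
by rewrite exprD -scalerAr mulrAC.
Qed.

Lemma vanishing_of_recurrence (R : realType) (p : {poly R[i]}) (u : nat -> R[i]) :
  p != 0 -> (forall z, root p z -> normc z < 1) ->
  (forall N, shift_eval p u N = 0) -> vanishing u.
Proof.
rewrite -size_poly_eq0; case sz_p: (size p) => [//|k] _.
elim: k p u sz_p => [|k IHk] p u sz_p roots_lt1 pu0 e e_gt0.
  have p0_neq0 : p`_0 != 0.
    by rewrite -[0%N]/(1.-1) -sz_p -lead_coefE lead_coef_eq0 -size_poly_eq0 sz_p.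
  exists 0%N => N _; move: (pu0 N) => /eqP.
  rewrite /shift_eval sz_p big_ord1 addn0 mulf_eq0 (negbTE p0_neq0) => /eqP ->.
  by rewrite normc0.
have [l root_l] : exists l, root p l by apply/closed_rootP; rewrite sz_p.
have [q def_p] := factor_theorem _ _ root_l.
have q_neq0 : q != 0 by apply: contra_eq_neq sz_p => q0; rewrite def_p q0 mul0r size_poly0.
have sz_q : size q = k.+1.
  by move: sz_p; rewrite def_p size_mul ?polyXsubC_eq0 // size_XsubC addn2 => -[].
apply: (@vanishing_linear_recursion _ l _ (fun N => u N.+1 - l * u N)) => //.
- exact: roots_lt1.
- by move=> N; rewrite addrC subrK.
apply: (IHk q) => // [z root_z|N]; first by apply: roots_lt1; rewrite def_p rootM root_z.
by rewrite -shift_eval_mulXsubC -def_p.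
Qed.

Lemma eigenvalue_invmx (F : fieldType) n (A : 'M[F]_n) a :
  A \in unitmx -> eigenvalue (invmx A) a -> eigenvalue A a^-1.
Proof.
move=> A_unit /eigenvalueP[v vB v_neq0]; apply/eigenvalueP; exists v => //.
have vE : v = a *: (v *m A) by rewrite scalemxAl -vB mulmxKV.
have a_neq0 : a != 0 by apply: contra_neq v_neq0 => a0; rewrite vE a0 scale0r.
by rewrite [in RHS]vE scalerA mulVf ?scale1r.
Qed.

Lemma complex_eigenvalue_invmx (R : realType) n (A : 'M[R]_n) z :
  A \in unitmx -> complex_eigenvalue (invmx A) z -> complex_eigenvalue A z^-1.
Proof.
rewrite /complex_eigenvalue !map_char_poly -!eigenvalue_root_char map_invmx.
by rewrite -(map_unitmx (real_complex R)); apply: eigenvalue_invmx.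
Qed.

Lemma horner_mx_inv_sub (F : fieldType) n (B : 'M[F]_n.+1) a :
  ~~ root (char_poly B) a -> exists g, (a%:M - B) * horner_mx B g = 1.
Proof.
rewrite -coprimep_XsubC => /Bezout_eq1_coprimepP[[g1 g2] /= bezout].
exists (- g2); move/(congr1 (horner_mx B)): bezout.
rewrite [g2 * _]mulrC rmorphD !rmorphM /= Cayley_Hamilton mulr0 add0r rmorph1 => <-.
by rewrite rmorphN rmorphB /= horner_mx_X horner_mx_C mulrN -mulNr opprB.
Qed.

Lemma subr1_mul_geometric (R : pzRingType) (b g : R) N :
  (1 - b) * g = 1 -> (1 - b) * (\sum_(k < N) b ^+ k + b ^+ N * g) = 1.
Proof.
move=> bg; have comm_b : GRing.comm (1 - b) (b ^+ N).
  by apply: commrX; rewrite /GRing.comm mulrBl mulrBr mul1r mulr1.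
rewrite mulrDr mulrA comm_b -mulrA bg mulr1 -opprB mulNr -subrX1.
by rewrite opprB subrK.
Qed.

Lemma normc_real (R : rcfType) (r : R) : normc (r%:C)%C = `|r|.
Proof. by rewrite /normc /= expr0n addr0 sqrtr_sqr. Qed.

Lemma subr1_inv_nonneg_poly (R : realType) n (B : 'M[R]_n.+1) :
  (forall z, complex_eigenvalue B z -> `|z| < 1) ->
  exists N (c : nat -> R), (forall k, 0 <= c k) /\ (1 - B) * \sum_(k < N) c k *: B ^+ k = 1.
Proof.
move=> eig_lt1; set p := char_poly B.
have roots_lt1 z : root (map_poly (real_complex R) p) z -> normc z < 1.
  by move=> /eig_lt1; rewrite -(ltcR (normc z) 1).
have p_neq0 : p != 0 by rewrite -size_poly_eq0 size_char_poly.
have [g Bg] : exists g, (1 - B) * horner_mx B g = 1.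
  apply: horner_mx_inv_sub; apply/negP => /(rmorph_root (real_complex R))/roots_lt1.
  by rewrite rmorph1 normc1 ltxx.
pose e N := ('X^N * g) %% p.
have e_horner N : horner_mx B (e N) = B ^+ N * horner_mx B g.
  move/(congr1 (horner_mx B)): (divp_eq ('X^N * g) p).
  rewrite rmorphD !rmorphM /= Cayley_Hamilton mulr0 add0r => <-.
  by rewrite rmorphXn /= horner_mx_X.
have size_e N : (size (e N) <= n.+1)%N by rewrite -ltnS -(size_char_poly B) ltn_modp.
have e_vanish (j : nat) : vanishing (fun N => (((e N)`_j)%:C)%C).
  apply: (vanishing_of_recurrence (p := map_poly (real_complex R) p)) => // [|N].
    by rewrite map_poly_eq0.
  by rewrite (shift_eval_map (real_complex R)) shift_eval_coef_modp.
have [M e_small] := eventually_forall (fun j : 'I_n.+1 => e_vanish j 1 ltr01).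
pose N := (M + n.+1)%N; have le_n_N : (n.+1 <= N)%N by rewrite leq_addl.
exists N, (fun k => 1 + (e N)`_k); split=> [k|].
  have [lt_k_n|le_n_k] := ltnP k n.+1; last first.
    by rewrite nth_default ?addr0 // (leq_trans (size_e N)).
  have := e_small N (leq_addr _ _) (Ordinal lt_k_n); rewrite normc_real ltr_norml /=.
  by case/andP=> /ltW; rewrite -subr_ge0 opprK addrC.
have -> : \sum_(k < N) (1 + (e N)`_k) *: B ^+ k = \sum_(k < N) B ^+ k + B ^+ N * horner_mx B g.
  rewrite -e_horner -[X in horner_mx _ X](take_poly_id (leq_trans (size_e N) le_n_N)).
  rewrite /take_poly poly_def rmorph_sum -big_split /=.
  by apply: eq_bigr => k _; rewrite scalerDl scale1r horner_mxZ rmorphXn /= horner_mx_X.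
exact: subr1_mul_geometric.
Qed.

Lemma convex_cone0 (R : realType) n (C : 'rV[R]_n -> Prop) x :
  convex_cone C -> C x -> C 0.
Proof. by move=> hC Cx; have := hC 0 0 x x (lexx _) (lexx _) Cx Cx; rewrite !scale0r addr0. Qed.

Lemma convex_cone_sum (R : realType) n (C : 'rV[R]_n -> Prop) (I : Type) (r : seq I)
    (c : I -> R) (v : I -> 'rV[R]_n) :
  convex_cone C -> C 0 -> (forall i, 0 <= c i) -> (forall i, C (v i)) ->
  C (\sum_(i <- r) c i *: v i).
Proof.
move=> hC C0 c_ge0 Cv; apply: big_ind => // [x y Cx Cy | i _].
  by have := hC 1 1 x y ler01 ler01 Cx Cy; rewrite !scale1r.
by have := hC (c i) 0 _ _ (c_ge0 i) (lexx _) (Cv i) (Cv i); rewrite scale0r addr0.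
Qed.

Theorem proposition3p2 (R : realType) (n : nat) (A : 'M[R]_n)
  (C : 'rV[R]_n -> Prop)
  (hn : (0 < n)%N)
  (hA : A \in unitmx)
  (hC : convex_cone C)
  (hinv : forall y : 'rV[R]_n, C y <-> exists x, C x /\ x *m A = y)
  (heig : forall z : R[i], complex_eigenvalue A z -> 1 < `|z|) :
  forall x : 'rV[R]_n, C (x *m A - x) -> C x.
Proof.
case: n hn A C hA hC hinv heig => // n _ A C hA hC hinv heig x Cy.
set B := invmx A.
have CB z k : C z -> C (z *m B ^+ k).
  elim: k => [|k IHk] Cz; first by rewrite expr0 mulmx1.
  have [w [Cw wA]] := (hinv _).1 (IHk Cz).
  by rewrite exprSr -mulmxE mulmxA -wA mulmxK.
have eigB z : complex_eigenvalue B z -> `|z| < 1.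
  move=> /(complex_eigenvalue_invmx hA)/heig.
  have [->|z_neq0] := eqVneq z 0; first by rewrite invr0 normr0 ltr10.
  by rewrite normfV invf_gt1 ?normr_gt0.
have [N [c [c_ge0 BS]]] := subr1_inv_nonneg_poly eigB.
have AB : (A - 1) * B = 1 - B by rewrite mulrBl mul1r -mulmxE mulmxV.
have -> : x = (x *m A - x) *m (B * \sum_(k < N) c k *: B ^+ k).
  by rewrite -[X in _ *m A - X]mulmx1 -mulmxBr -mulmxA mulmxE mulrA AB BS mulmx1.
rewrite mulr_sumr mulmx_sumr.
under eq_bigr do rewrite -scalerAr -exprS -scalemxAr.
by apply: convex_cone_sum => //; [apply: convex_cone0 Cy | move=> k; apply: CB].
Qed.
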